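(* Let $\mathrm r\in\mathbb{Z}_+^d$ with $\mathrm r>0$, let $x\in S_d^{\mathrm r}$ with finite length, and let $\bar x$ be the associated sequence (which lies in $\bar S_d^{\mathrm r}$). Then the number of good cyclical permutations of $x$ (with respect to $\mathrm r$) equals the number of good cyclical permutations of $\bar x$ (with respect to $\mathrm r$).
   Context: $d\ge2$, $[d]=\{1,\dots,d\}$, $\mathbb N=\{1,2,\dots\}$, $1_d=(1,\dots,1)$. $S_d$: families $x=(x^{(1)},\dots,x^{(d)})$, $x^{(i)}=(x^{i,1},\dots,x^{i,d})$ a $\mathbb{Z}^d$-valued sequence indexed by $\{0,\dots,n_i\}$, $x^{(i)}_0=0$, $x^{i,j}$ nondecreasing for $i\ne j$, $x^{i,i}_{n+1}-x^{i,i}_n\ge-1$; $(n_1,\dots,n_d)$ is its length; $x^{i,j}(n)=x^{i,j}_n$. A solution of $(\mathrm r,x)$ is $\mathrm s\in\mathbb{Z}_+^d$, $\mathrm s\le$ length, with $r_j+\sum_ix^{i,j}(s_i)=0$ for all $j$; the smallest solution is a solution that is coordinatewise $\le$ every solution. $S_d^{\mathrm r}$: $x\in S_d$ whose length lies in $\mathbb{N}^d$ and is the smallest solution of $(\mathrm r,x)$; $\bar S_d^{\mathrm r}$: those $x\in S_d^{\mathrm r}$ with $x^{i,i}_k=-k$ for all $k,i$. For $x\in S_d$ set $k_i=-\min_{0\le n\le n_i}x^{i,i}_n$, $\tau^{(i)}_k=\min\{n\ge0:x^{i,i}_n=-k\}$ ($0\le k\le k_i$) and $\bar x^{i,j}_k=x^{i,j}(\tau^{(i)}_k)$,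 $0\le k\le k_i$. Cyclical permutations: for $g$ on $\{0,\dots,m\}$ with $g(0)=0$, $1\le n\le m$, $0\le q\le n-1$: $g_{q,n}(h)=g(q+h)-g(q)$ for $0\le h\le n-q$, $g_{q,n}(h)=g(h-(n-q))+g(n)-g(q)$ for $n-q\le h\le n$, $g_{q,n}(h)=g(h)$ for $h\ge n$; for $y\in S_d$ of length $\mathrm m\in\mathbb N^d$ and $\mathrm q\le\mathrm m-1_d$, $y_{\mathrm q,\mathrm m}=(y^{(1)}_{q_1,m_1},\dots,y^{(d)}_{q_d,m_d})$. If $\mathrm m$ is a solution of $(\mathrm r,y)$, $y_{\mathrm q,\mathrm m}$ is a good cyclical permutation of $y$ (with respect to $\mathrm r$) if $\mathrm m$ is the smallest solution of $(\mathrm r,y_{\mathrm q,\mathrm m})$; the number of good cyclical permutations is the number of such $\mathrm q$. *)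

From mathcomp Require Import all_boot all_order all_algebra.
Set Implicit Arguments. Unset Strict Implicit. Unset Printing Implicit Defensive.
Import Order.TTheory GRing.Theory Num.Theory.

Local Open Scope ring_scope.

(* A family x = (x^(1),...,x^(d)) is encoded as
     x : 'I_d -> nat -> 'I_d -> int,   x i n j = x^{i,j}_n,
   together with its length  len : 'I_d -> nat  (len i = n_i).
   Values of x i n j for n > len i are irrelevant. *)
Definition mtfamily (d : nat) := 'I_d -> nat -> 'I_d -> int.

Definition in_S (d : nat) (x : mtfamily d) (len : 'I_d -> nat) : Prop :=
  [/\ (forall i j, x i 0%N j = 0),
      (forall i j, i != j -> forall n, (n < len i)%N -> x i n j <= x i n.+1 j)
    & (forall i n, (n < len i)%N -> x i n.+1 i - x i n i >= -1)].

Definition is_solution (d : nat) (r : 'I_d -> nat) (x : mtfamily d)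
  (len : 'I_d -> nat) (s : 'I_d -> nat) : bool :=
  [forall i, (s i <= len i)%N] &&
  [forall j, (r j)%:Z + \sum_(i < d) x i (s i) j == 0].

(* s is the smallest solution of (r, x): a solution that is coordinatewise
   below every solution (all solutions are <= len, so the quantification is
   over a finite type). *)
Definition is_smallest_solution (d : nat) (r : 'I_d -> nat) (x : mtfamily d)
  (len : 'I_d -> nat) (s : 'I_d -> nat) : bool :=
  is_solution r x len s &&
  [forall s' : {dffun forall i : 'I_d, 'I_(len i).+1},
     is_solution r x len (fun i => nat_of_ord (s' i)) ==>
     [forall i, (s i <= s' i)%N]].

Definition in_Sr (d : nat) (r : 'I_d -> nat) (x : mtfamily d)
  (len : 'I_d -> nat) : Prop :=
  [/\ in_S x len, (forall i, (0 < len i)%N) & is_smallest_solution r x len len].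

Definition cyc (g : nat -> int) (q n : nat) (h : nat) : int :=
  if (h <= n - q)%N then g (q + h)%N - g q
  else if (h <= n)%N then g (h - (n - q))%N + g n - g q
  else g h.

Definition cycperm (d : nat) (y : mtfamily d) (q m : 'I_d -> nat) : mtfamily d :=
  fun i h j => cyc (fun k => y i k j) (q i) (m i) h.

Definition ngood (d : nat) (r : 'I_d -> nat) (y : mtfamily d)
  (m : 'I_d -> nat) : nat :=
  #|[pred q : {dffun forall i : 'I_d, 'I_(m i)} |
     is_smallest_solution r (cycperm y (fun i => nat_of_ord (q i)) m) m m]|.

Definition kbar (d : nat) (x : mtfamily d) (len : 'I_d -> nat) (i : 'I_d) : nat :=
  absz (- \big[Order.min/0%Z]_(n < (len i).+1) x i n i).

Definition tau (d : nat) (x : mtfamily d) (len : 'I_d -> nat) (i : 'I_d)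
  (k : nat) : nat :=
  find (fun n => x i n i == - (k%:Z)) (iota 0 (len i).+1).

Definition xbar (d : nat) (x : mtfamily d) (len : 'I_d -> nat) : mtfamily d :=
  fun i k j => x i (tau x len i k) j.

From mathcomp Require Import all_boot all_order all_algebra zify.
From Stdlib Require Import FunctionalExtensionality.
Set Implicit Arguments. Unset Strict Implicit. Unset Printing Implicit Defensive.
Import Order.TTheory GRing.Theory Num.Theory.
Local Open Scope ring_scope.

(* Each diagonal x^{i,i} is a walk with steps >= -1 which, by minimality of
   the solution n, attains its minimum -k_i only at time n_i; hence its first
   hitting times tau_0 < ... < tau_{k_i} = n_i are exactly its record times.
   A good cyclical permutation must cut every x^{(i)} at a record time
   q_i = tau_{a_i}. The diagonal of x^{(i)} rotated at tau_{a_i} is again such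
   a walk, its hitting times are given explicitly by [shift_time], and read
   along them x^{(i)} rotated at tau_{a_i} is xbar^{(i)} rotated at a_i.
   Since below any point with nonpositive residual there is a solution,
   minimal solutions of the two rotated systems correspond to each other, so
   q = tau(a) is a bijection between the good cyclical permutations of x and
   those of xbar. *)

Lemma find_iota0 (P : pred nat) (N h : nat) :
  (h <= N)%N -> P h -> (forall h', (h' < h)%N -> ~~ P h') ->
  find P (iota 0 N.+1) = h.
Proof.
move=> hN Ph before_h.
have hasP : has P (iota 0 N.+1) by apply/hasP; exists h; rewrite ?mem_iota.
have lt_find := hasP; rewrite has_find size_iota in lt_find.
have := nth_find 0 hasP; rewrite nth_iota // add0n => Pfind.
case: (ltngtP (find P (iota 0 N.+1)) h) => // lt.
  by rewrite (negbTE (before_h _ lt)) in Pfind.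
by have := before_find 0 lt; rewrite nth_iota ?add0n ?Ph //; lia.
Qed.

Lemma skipfree_hit (g : nat -> int) (N h : nat) (L : int) :
  L <= g 0%N -> (forall n, (n < N)%N -> -1 <= g n.+1 - g n) ->
  (h <= N)%N -> g h <= L ->
  exists2 h', (h' <= h)%N & g h' = L /\ forall h'', (h'' < h')%N -> L < g h''.
Proof.
move=> L_g0 g_step hN ghL.
have ex : exists m, (m <= h)%N && (g m <= L) by exists h; rewrite leqnn ghL.
case: (ex_minnP ex) => m /andP [mh gmL] m_min.
have before_m h'' : (h'' < m)%N -> L < g h''.
  move=> lt; rewrite ltNge; apply/negP => le.
  by have := m_min h''; rewrite le (leq_trans (ltnW lt) mh) leqNgt lt => /(_ isT).
exists m => //; split=> //.
case: m mh gmL {m_min} before_m => [|m] mh gmL before_m.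
  exact/le_anti/andP.
have := before_m m (ltnSn m); have := g_step m (leq_trans mh hN); lia.
Qed.

Definition hit_time (g : nat -> int) (N k : nat) : nat :=
  find (fun n => g n == - k%:Z) (iota 0 N.+1).

Lemma hit_time_unique (g : nat -> int) (N k h : nat) :
  (h <= N)%N -> g h = - k%:Z -> (forall h', (h' < h)%N -> - k%:Z < g h') ->
  hit_time g N k = h.
Proof.
move=> hN gh before_h; apply: find_iota0 => //; first exact/eqP.
by move=> h' /before_h; rewrite lt_def eq_sym => /andP [].
Qed.

Definition skipfree_walk (g : nat -> int) (N K : nat) : Prop :=
  [/\ g 0%N = 0, forall n, (n < N)%N -> -1 <= g n.+1 - g n,
      g N = - K%:Z & forall h, (h < N)%N -> g N < g h].

Section SkipfreeWalk.
Variables (g : nat -> int) (N K : nat).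
Hypothesis hg : skipfree_walk g N K.
Local Notation tau := (hit_time g N).

Lemma hit_timeP b : (b <= K)%N ->
  [/\ (tau b <= N)%N, g (tau b) = - b%:Z & forall h, (h < tau b)%N -> - b%:Z < g h].
Proof.
case: hg => g0 g_step gN _ bK.
have [||h hN [gh before_h]] := @skipfree_hit g N N (- b%:Z) _ g_step (leqnn N).
- by rewrite g0; lia.
- by rewrite gN; lia.
by rewrite (hit_time_unique hN gh before_h).
Qed.

Lemma hit_time0 : tau 0 = 0%N.
Proof. by case: hg => g0 _ _ _; apply: hit_time_unique. Qed.

Lemma hit_timeK : tau K = N.
Proof. by case: hg => _ _ gN gmin; apply: hit_time_unique; rewrite -?gN. Qed.

Lemma hit_time_lt b : (b < K)%N -> (tau b < N)%N.
Proof.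
move=> bK; have [tN gt _] := hit_timeP (ltnW bK).
rewrite ltn_neqAle tN andbT; apply: contraTneq bK => eN.
by case: hg => _ _ gN _; move: gt; rewrite eN gN; lia.
Qed.

Lemma hit_time_mono b b' : (b <= b')%N -> (b' <= K)%N -> (tau b <= tau b')%N.
Proof.
move=> bb' b'K; have [_ _ before_b] := hit_timeP (leq_trans bb' b'K).
have [_ gb' _] := hit_timeP b'K.
by rewrite leqNgt; apply/negP => /before_b; rewrite gb'; lia.
Qed.

Lemma hit_time_inj b b' : (b <= K)%N -> (b' <= K)%N -> tau b = tau b' -> b = b'.
Proof.
move=> bK b'K e; have [_ gb _] := hit_timeP bK; have [_ gb' _] := hit_timeP b'K.
by move: gb gb'; rewrite e; lia.
Qed.

Lemma hit_time_le h : (h <= N)%N ->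
  exists2 t, (t <= K)%N & (tau t <= h)%N /\ - t%:Z <= g h.
Proof.
case: hg => _ _ gN gmin hN.
case: (lerP 0 (g h)) => gh0; first by exists 0%N; rewrite ?hit_time0.
have gh_ge : - K%:Z <= g h.
  by move: hN; rewrite -gN leq_eqVlt => /orP [/eqP -> // | /gmin /ltW].
have tK : (absz (g h) <= K)%N by lia.
exists (absz (g h)) => //; split; last lia.
have [_ _ before_t] := hit_timeP tK.
by rewrite leqNgt; apply/negP => /before_t; lia.
Qed.

Lemma record_hit_time h : (h < N)%N -> (forall h', (h' < h)%N -> g h < g h') ->
  exists2 a, (a < K)%N & h = tau a.
Proof.
case: hg => g0 _ gN gmin hN record.
have gh_le0 : g h <= 0.
  case: h hN record => [|h] _ record; first by rewrite g0.
  by have := record 0%N isT; rewrite g0 => /ltW.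
have := gmin h hN; rewrite gN => gh_gt.
exists (absz (g h)); first lia.
by symmetry; apply: hit_time_unique => [||h' /record]; [exact: ltnW | lia | lia].
Qed.

End SkipfreeWalk.

Lemma cyc0 (g : nat -> int) (q n : nat) : cyc g q n 0 = 0.
Proof. by rewrite /cyc leq0n addn0 subrr. Qed.

Lemma cyc_front (g : nat -> int) (q n h : nat) :
  (h <= n - q)%N -> cyc g q n h = g (q + h)%N - g q.
Proof. by move=> hnq; rewrite /cyc hnq. Qed.

Lemma cyc_back (g : nat -> int) (q n h : nat) : g 0%N = 0 -> (q <= n)%N ->
  (h <= q)%N -> cyc g q n (n - q + h) = g h + g n - g q.
Proof.
move=> g0 qn hq; case: (posnP h) => [-> | h_gt0].
  by rewrite addn0 cyc_front // subnKC // g0 add0r.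
rewrite /cyc ifF; last lia.
by rewrite ifT ?addKn //; lia.
Qed.

Lemma cyc_end (g : nat -> int) (q n : nat) :
  g 0%N = 0 -> (q <= n)%N -> cyc g q n n = g n.
Proof. by move=> g0 qn; have := cyc_back g0 qn (leqnn q); rewrite subnK // => ->; lia. Qed.

Lemma cyc_step (g : nat -> int) (q n h : nat) : g 0%N = 0 -> (q < n)%N -> (h < n)%N ->
  exists2 p, (p < n)%N & cyc g q n h.+1 - cyc g q n h = g p.+1 - g p.
Proof.
move=> g0 qn hn; case: (ltnP h (n - q)) => [h_front | h_back].
  by exists (q + h)%N; rewrite ?cyc_front -?addnS //; lia.
have [h' -> h'q] : exists2 h', h = (n - q + h')%N & (h' < q)%N.
  by exists (h - (n - q))%N; lia.
by exists h'; rewrite -?addnS ?cyc_back //; lia.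
Qed.

Lemma cycperm_in_S d (x : mtfamily d) (n q : 'I_d -> nat) :
  in_S x n -> (forall i, (q i < n i)%N) -> in_S (cycperm x q n) n.
Proof.
move=> [x0 x_mono x_step] qn; split=> [i j | i j ij h hn | i h hn]; rewrite /cycperm.
- exact: cyc0.
- have [p pn e] := cyc_step (g := fun k => x i k j) (x0 i j) (qn i) hn.
  by rewrite -subr_ge0 e subr_ge0; apply: x_mono.
- by have [p pn ->] := cyc_step (g := fun k => x i k i) (x0 i i) (qn i) hn; apply: x_step.
Qed.

Lemma cycperm_end d (x : mtfamily d) (n q : 'I_d -> nat) i j :
  in_S x n -> (q i <= n i)%N -> cycperm x q n i (n i) j = x i (n i) j.
Proof. by case=> x0 _ _ qn; apply: cyc_end. Qed.

Lemma cyc_min_record (g : nat -> int) (q N : nat) : g 0%N = 0 -> (q < N)%N ->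
  (forall h, (h < N)%N -> cyc g q N N < cyc g q N h) ->
  forall h, (h < q)%N -> g q < g h.
Proof.
move=> g0 qN cyc_min h hq; have /cyc_min : (N - q + h < N)%N by lia.
by rewrite cyc_end ?cyc_back //; try lia; apply: ltnW.
Qed.

Section CyclicShift.
Variables (g : nat -> int) (N K a : nat).
Hypotheses (hg : skipfree_walk g N K) (aK : (a < K)%N).
Local Notation tau := (hit_time g N).

Definition shift_time (b : nat) : nat :=
  if (b <= K - a)%N then (tau (a + b) - tau a)%N
  else (N - tau a + tau (b - (K - a)))%N.

Lemma cyc_shift_time (f : nat -> int) b : f 0%N = 0 -> (b <= K)%N ->
  cyc f (tau a) N (shift_time b) = cyc (fun k => f (tau k)) a K b.
Proof.
move=> f0 bK; have qN := hit_time_lt hg aK; rewrite /shift_time.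
case: ifP => b_front.
  have abK : (a + b <= K)%N by lia.
  have q_le := hit_time_mono hg (leq_addr b a) abK.
  have [tN _ _] := hit_timeP hg abK.
  by rewrite !cyc_front ?subnKC //; lia.
have [b' -> b'a] : exists2 b', b = (K - a + b')%N & (b' <= a)%N.
  by exists (b - (K - a))%N; lia.
rewrite addKn cyc_back ?(ltnW qN) ?(hit_time_mono hg b'a (ltnW aK)) //.
by rewrite cyc_back ?(hit_time0 hg) ?(hit_timeK hg) //; lia.
Qed.

Lemma shift_time_val b : (b <= K)%N -> cyc g (tau a) N (shift_time b) = - b%:Z.
Proof.
move=> bK; have [_ ga _] := hit_timeP hg (ltnW aK).
case: (hg) => g0 _ _ _; rewrite cyc_shift_time //.
case: (leqP b (K - a)) => b_front.
  have [|_ gab _] := hit_timeP hg (b := a + b); first lia.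
  by rewrite cyc_front // gab ga; lia.
have [b' -> b'a] : exists2 b', b = (K - a + b')%N & (b' <= a)%N.
  by exists (b - (K - a))%N; lia.
have [_ gb' _] := hit_timeP hg (leq_trans b'a (ltnW aK)).
have [_ gK _] := hit_timeP hg (leqnn K).
by rewrite cyc_back ?(hit_time0 hg) ?gb' ?gK ?ga //; lia.
Qed.

Lemma shift_time_first b h : (b <= K)%N -> (h < shift_time b)%N ->
  - b%:Z < cyc g (tau a) N h.
Proof.
case: (hg) => g0 _ gN gmin bK; have qN := hit_time_lt hg aK.
have [_ ga _] := hit_timeP hg (ltnW aK).
rewrite /shift_time; case: ifP => b_front h_lt.
  have [|tN _ before_ab] := hit_timeP hg (b := a + b); first lia.
  have /before_ab : (tau a + h < tau (a + b))%N by lia.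
  by rewrite cyc_front ?ga //; lia.
case: (leqP h (N - tau a)) => h_front.
  have : - K%:Z <= g (tau a + h).
    have : (tau a + h <= N)%N by lia.
    by rewrite -gN leq_eqVlt => /orP [/eqP -> // | /gmin /ltW].
  by rewrite cyc_front ?ga //; lia.
have b'a : (b - (K - a) <= a)%N by lia.
have [_ _ before_b'] := hit_timeP hg (leq_trans b'a (ltnW aK)).
have b'_le := hit_time_mono hg b'a (ltnW aK).
have [h' -> h'_lt] : exists2 h', h = (N - tau a + h')%N & (h' < tau (b - (K - a)))%N.
  by exists (h - (N - tau a))%N; lia.
have := before_b' h' h'_lt.
by rewrite cyc_back ?gN ?ga ?(ltnW qN) //; lia.
Qed.

Lemma shift_timeK : shift_time K = N.
Proof.
have qN := hit_time_lt hg aK; rewrite /shift_time; case: ifP => K_front.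
  have -> : a = 0%N by lia.
  by rewrite add0n (hit_timeK hg) (hit_time0 hg) subn0.
by rewrite subKn ?subnK //; lia.
Qed.

Lemma cyc_skipfree : skipfree_walk (cyc g (tau a) N) N K.
Proof.
case: (hg) => g0 g_step gN _; have qN := hit_time_lt hg aK.
have cycN : cyc g (tau a) N N = - K%:Z by rewrite cyc_end // ltnW.
split=> // [||h hN]; first exact: cyc0.
  by move=> n nN; have [p pN ->] := cyc_step g0 qN nN; apply: g_step.
by rewrite cycN; apply: (shift_time_first (leqnn K)); rewrite shift_timeK.
Qed.

Lemma hit_time_cyc b : (b <= K)%N -> hit_time (cyc g (tau a) N) N b = shift_time b.
Proof.
move=> bK; apply: hit_time_unique; last by move=> h; apply: shift_time_first.
  rewrite leqNgt; apply/negP => /(shift_time_first bK).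
  by case: cyc_skipfree => _ _ -> _; lia.
exact: shift_time_val.
Qed.

End CyclicShift.

Definition resid d (r : 'I_d -> nat) (y : mtfamily d) (s : 'I_d -> nat) (j : 'I_d) : int :=
  (r j)%:Z + \sum_(i < d) y i (s i) j.

Lemma resid_set d r (y : mtfamily d) (s : 'I_d -> nat) i0 v j :
  resid r y [eta s with i0 |-> v] j = resid r y s j - y i0 (s i0) j + y i0 v j.
Proof.
rewrite /resid (bigD1 i0) //= [in RHS](bigD1 i0) //= eqxx.
under eq_bigr => i /negbTE -> do [].
lia.
Qed.

Lemma resid_le d r (y y' : mtfamily d) (s s' : 'I_d -> nat) j :
  (forall i, y i (s i) j <= y' i (s' i) j) -> resid r y s j <= resid r y' s' j.
Proof. by move=> le_ss'; rewrite lerD2l; apply: ler_sum => i _. Qed.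

Lemma smallestP d r (y : mtfamily d) (m s : 'I_d -> nat) :
  reflect [/\ forall i, (s i <= m i)%N, forall j, resid r y s j = 0 &
    forall u, (forall i, (u i <= m i)%N) -> (forall j, resid r y u j = 0) ->
      forall i, (s i <= u i)%N]
  (is_smallest_solution r y m s).
Proof.
have solP u : reflect ((forall i, (u i <= m i)%N) /\ forall j, resid r y u j = 0)
    (is_solution r y m u).
  apply: (iffP andP) => -[u_le u_sol].
    by split=> [i | j]; [exact: (forallP u_le) | exact/eqP/(forallP u_sol)].
  by split; apply/forallP => k; [exact: u_le | exact/eqP/u_sol].
apply: (iffP andP) => [[/solP [s_le s_sol] /forallP s_min] | [s_le s_sol s_min]].
  split=> // u u_le u_sol i.
  pose u' : {dffun forall i, 'I_(m i).+1} := [ffun i => inord (u i)].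
  have u'E : (fun i => nat_of_ord (u' i)) = u.
    by apply: functional_extensionality => k; rewrite ffunE inordK // ltnS.
  have /implyP := s_min u'; rewrite u'E => /(_ (introT (solP u) (conj u_le u_sol))).
  by move/forallP/(_ i); rewrite -[in X in _ -> X]u'E.
split; first exact/solP.
apply/forallP => u'; apply/implyP => /solP [u'_le u'_sol].
by apply/forallP; apply: s_min.
Qed.

Lemma in_S_mono d (y : mtfamily d) (m : 'I_d -> nat) i j h h' : in_S y m -> i != j ->
  (h <= h')%N -> (h' <= m i)%N -> y i h j <= y i h' j.
Proof.
case=> _ y_mono _ ij; elim: h' => [|h' IH]; first by rewrite leqn0 => /eqP ->.
rewrite leq_eqVlt => /orP [/eqP -> // | /IH le_h h'm].
exact: le_trans (le_h (ltnW h'm)) (y_mono i j ij h' h'm).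
Qed.

Lemma in_S_ge0 d (y : mtfamily d) (m : 'I_d -> nat) i j h : in_S y m -> i != j ->
  (h <= m i)%N -> 0 <= y i h j.
Proof. by move=> yS ij hm; case: (yS) => y0 _ _; rewrite -(y0 i j) (in_S_mono yS ij). Qed.

Lemma resid_ge0 d r (y : mtfamily d) (m s : 'I_d -> nat) j : in_S y m ->
  (forall i, (s i <= m i)%N) -> s j = 0%N -> 0 <= resid r y s j.
Proof.
move=> yS sm sj0; case: (yS) => y0 _ _.
rewrite /resid (bigD1 j) //= sj0 y0 add0r addr_ge0 // sumr_ge0 // => i ij.
exact: in_S_ge0 yS ij (sm i).
Qed.

(* Lowering s_j by one raises resid_j by at most one and lowers every other
   coordinate of resid, so from any s with resid <= 0 one descends to a
   solution. *)
Lemma solution_below d r (y : mtfamily d) (m s : 'I_d -> nat) : in_S y m ->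
  (forall i, (s i <= m i)%N) -> (forall j, resid r y s j <= 0) ->
  exists2 u, (forall i, (u i <= s i)%N) & forall j, resid r y u j = 0.
Proof.
move=> yS; move: {2}(\sum_(i < d) s i)%N.+1 (ltnSn (\sum_(i < d) s i)) => N.
elim: N s => [// | N IH] s s_sum sm s_le0.
have [solved | /forallPn [j /negP resid_ne0]] := boolP [forall j, resid r y s j == 0].
  by exists s => // j; apply/eqP/(forallP solved).
have resid_lt0 : resid r y s j < 0 by rewrite lt_neqAle s_le0 andbT; exact/negP.
have sj_gt0 : (0 < s j)%N.
  rewrite lt0n; apply/negP => /eqP /(resid_ge0 r yS sm).
  by rewrite leNgt resid_lt0.
pose s' := [eta s with j |-> (s j).-1].
have s's i : (s' i <= s i)%N by rewrite /=; case: eqP => // ->; apply: leq_pred.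
have [|||u us' u_sol] := IH s'.
- rewrite (bigD1 j) //= eqxx -ltnS.
  under eq_bigr => i /negbTE -> do [].
  by move: s_sum; rewrite (bigD1 j) //=; lia.
- by move=> i; apply: leq_trans (s's i) (sm i).
- move=> j'; rewrite resid_set.
  case: (eqVneq j' j) => [-> | j'j].
    case: yS => _ _ y_step; have := y_step j (s j).-1; rewrite prednK //.
    by move=> /(_ (sm j)); lia.
  have := @in_S_mono d y m j j' (s j).-1 (s j) yS.
  by rewrite eq_sym j'j leq_pred => /(_ isT isT (sm j)); have := s_le0 j'; lia.
by exists u => // i; apply: leq_trans (us' i) (s's i).
Qed.

Lemma tau_hit_time d (x : mtfamily d) (len : 'I_d -> nat) i k :
  tau x len i k = hit_time (fun h => x i h i) (len i) k.
Proof. by []. Qed.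

Section SmallestSolution.
Variables (d : nat) (r : 'I_d -> nat) (x : mtfamily d) (n : 'I_d -> nat).
Hypothesis hx : in_Sr r x n.

Lemma Sr_resid j : resid r x n j = 0.
Proof. by case: hx => _ _ /smallestP []. Qed.

Lemma Sr_diag_end_le0 i : x i (n i) i <= 0.
Proof.
case: hx => xS _ _; have := Sr_resid i; rewrite /resid (bigD1 i) //=.
set S := \sum_(_ < _ | _) _.
have : 0 <= S by apply: sumr_ge0 => k ki; apply: in_S_ge0 xS ki _.
lia.
Qed.

(* Otherwise the diagonal walk reaches x^{i,i}_{n_i} at some earlier time, and
   lowering n_i to it gives a point with nonpositive residual strictly below n,
   hence a solution strictly below n. *)
Lemma Sr_diag_min i h : (h < n i)%N -> x i (n i) i < x i h i.
Proof.
case: (hx) => xS _ /smallestP [_ _ n_min] hn; rewrite ltNge; apply/negP => le_h.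
case: (xS) => x0 _ x_step.
have [|h' h'h [xh' _]] := @skipfree_hit (fun k => x i k i) (n i) h (x i (n i) i)
  _ (x_step i) (ltnW hn) le_h; first by rewrite x0 Sr_diag_end_le0.
have s_le k : ([eta n with i |-> h'] k <= n k)%N.
  by rewrite /=; case: eqP => [-> |] //; lia.
have [j|u us u_sol] := solution_below (r := r) xS s_le.
  rewrite resid_set Sr_resid; case: (eqVneq i j) => [<- | ij]; first by rewrite xh'; lia.
  by have := in_S_mono xS ij (ltnW (leq_ltn_trans h'h hn)) (leqnn _); lia.
have := n_min u (fun k => leq_trans (us k) (s_le k)) u_sol i.
by have := us i; rewrite /= eqxx; lia.
Qed.

Lemma kbarE i : (kbar x n i)%:Z = - x i (n i) i.
Proof.
rewrite /kbar; have -> : \big[Order.min/0%Z]_(h < (n i).+1) x i h i = x i (n i) i.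
  apply/le_anti/andP; split; first exact: (bigmin_le _ ord_max).
  apply: le_bigmin => [|h _]; first exact: Sr_diag_end_le0.
  have := ltn_ord h; rewrite ltnS leq_eqVlt => /orP [/eqP -> // | /Sr_diag_min /ltW //].
by rewrite gez0_abs // oppr_ge0 Sr_diag_end_le0.
Qed.

Lemma Sr_walk i : skipfree_walk (fun h => x i h i) (n i) (kbar x n i).
Proof.
case: hx => [[x0 _ x_step] _ _].
by split; [exact: x0 | exact: x_step | rewrite kbarE opprK | exact: Sr_diag_min].
Qed.

Lemma xbar_in_S : in_S (xbar x n) (kbar x n).
Proof.
case: (hx) => xS _ _; case: (xS) => x0 _ _.
split=> [i j | i j ij b bK | i b bK]; rewrite /xbar !tau_hit_time.
- by rewrite (hit_time0 (Sr_walk i)).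
- have [tN _ _] := hit_timeP (Sr_walk i) bK.
  exact: in_S_mono xS ij (hit_time_mono (Sr_walk i) (leqnSn b) bK) tN.
- have [_ -> _] := hit_timeP (Sr_walk i) bK.
  by have [_ -> _] := hit_timeP (Sr_walk i) (ltnW bK); lia.
Qed.

End SmallestSolution.

Section GoodCyclicPermutations.
Variables (d : nat) (r : 'I_d -> nat) (x : mtfamily d) (n : 'I_d -> nat).
Hypothesis hx : in_Sr r x n.
Local Notation K := (kbar x n).
Local Notation tau i := (hit_time (fun h => x i h i) (n i)).

Lemma good_cycperm_hit_time (q : 'I_d -> nat) : (forall i, (q i < n i)%N) ->
  is_smallest_solution r (cycperm x q n) n n ->
  exists2 a, (forall i, (a i < K i)%N) & forall i, q i = tau i (a i).
Proof.
move=> qn good; case: (hx) => xS n_gt0 _; case: (xS) => x0 _ _.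
have hy : in_Sr r (cycperm x q n) n by split=> //; apply: cycperm_in_S.
have record i h : (h < q i)%N -> x i (q i) i < x i h i.
  apply: (cyc_min_record (g := fun k => x i k i) (x0 i i) (qn i)).
  exact: Sr_diag_min hy i.
exact: fin_all_exists2 (fun i => record_hit_time (Sr_walk hx i) (qn i) (record i)).
Qed.

Lemma good_cycperm_xbar (a : 'I_d -> nat) : (forall i, (a i < K i)%N) ->
  is_smallest_solution r (cycperm x (fun i => tau i (a i)) n) n n =
  is_smallest_solution r (cycperm (xbar x n) a K) K K.
Proof.
move=> aK; case: (hx) => xS _ _; case: (xS) => x0 _ _.
set y := cycperm x _ n; set z := cycperm (xbar x n) a K.
have y_walk i : skipfree_walk (fun h => y i h i) (n i) (K i).
  exact: cyc_skipfree (Sr_walk hx i) (aK i).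
pose tauy i := hit_time (fun h => y i h i) (n i).
have yz i b j : (b <= K i)%N -> y i (tauy i b) j = z i b j.
  move=> bK; rewrite /tauy (hit_time_cyc (Sr_walk hx i) (aK i) bK).
  exact: (cyc_shift_time (Sr_walk hx i) (aK i) (f := fun k => x i k j) (x0 i j) bK).
have yS : in_S y n.
  by apply: cycperm_in_S xS _ => i; exact: (hit_time_lt (Sr_walk hx i) (aK i)).
have y_resid j : resid r y n j = 0.
  rewrite -(Sr_resid hx j) /resid; congr (_ + _); apply: eq_bigr => i _.
  by rewrite /y cycperm_end // ltnW // (hit_time_lt (Sr_walk hx i)).
have z_resid j : resid r z K j = 0.
  rewrite -(y_resid j) /resid; congr (_ + _); apply: eq_bigr => i _.
  by rewrite -yz // /tauy (hit_timeK (y_walk i)).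
have zS : in_S z K by apply: cycperm_in_S (xbar_in_S hx) aK.
apply/idP/idP => /smallestP [_ _ min]; apply/smallestP.
  split=> // u u_le u_sol i.
  have s_le k : (tauy k (u k) <= n k)%N by have [] := hit_timeP (y_walk k) (u_le k).
  have s_sol j : resid r y (fun k => tauy k (u k)) j = 0.
    by rewrite -(u_sol j) /resid; congr (_ + _); apply: eq_bigr => k _; rewrite yz.
  have n_le := min _ s_le s_sol i.
  by rewrite leqNgt; apply/negP => /(hit_time_lt (y_walk i)); rewrite ltnNge n_le.
split=> // u u_le u_sol i.
have [t t_le t_spec] := fin_all_exists2 (fun k => hit_time_le (y_walk k) (u_le k)).
have [j|w w_le w_sol] := solution_below (r := r) zS t_le.
  rewrite -(u_sol j); apply: resid_le => k; have [tk_le yt_ge] := t_spec k.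
  rewrite -yz //; case: (eqVneq k j) => [<- | kj].
    by have [_ -> _] := hit_timeP (y_walk k) (t_le k).
  exact: in_S_mono yS kj tk_le (u_le k).
have K_le := min w (fun k => leq_trans (w_le k) (t_le k)) w_sol i.
have ti : t i = K i by have := w_le i; have := t_le i; lia.
by have [] := t_spec i; rewrite ti /tauy (hit_timeK (y_walk i)).
Qed.

End GoodCyclicPermutations.

Theorem lemma4p7 (d : nat) (hd : (2 <= d)%N) (r : 'I_d -> nat)
  (hr : exists j, (0 < r j)%N)
  (x : mtfamily d) (len : 'I_d -> nat) :
  in_Sr r x len ->
  ngood r x len = ngood r (xbar x len) (kbar x len).
Proof.
move=> hx; set K := kbar x len.
pose lift (a : {dffun forall i : 'I_d, 'I_(K i)}) : {dffun forall i, 'I_(len i)} :=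
  [ffun i => Ordinal (hit_time_lt (Sr_walk hx i) (ltn_ord (a i)))].
have liftE a : (fun i => nat_of_ord (lift a i)) =
                (fun i => hit_time (fun h => x i h i) (len i) (a i)).
  by apply: functional_extensionality => i; rewrite ffunE.
have lift_inj : injective lift.
  move=> a a' /ffunP e; apply/ffunP => i; apply/val_inj.
  have := e i; rewrite !ffunE => -[].
  exact: (hit_time_inj (Sr_walk hx i) (ltnW (ltn_ord (a i))) (ltnW (ltn_ord (a' i)))).
rewrite /ngood -(card_image lift_inj); apply: eq_card => q; rewrite inE /=.
apply/idP/imageP => [good | [a]]; last first.
  by rewrite inE /= => good ->; rewrite liftE good_cycperm_xbar.
have [a aK qE] := good_cycperm_hit_time hx (fun i => ltn_ord (q i)) good.
exists [ffun i => Ordinal (aK i)]; last first.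
  by apply/ffunP => i; apply/val_inj; rewrite !ffunE /= qE.
rewrite inE /=; have -> : (fun i => nat_of_ord ([ffun i => Ordinal (aK i)] i)) = a.
  by apply: functional_extensionality => i; rewrite ffunE.
by rewrite -good_cycperm_xbar // -(functional_extensionality _ _ qE).
Qed.
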